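(* Let $n\ge2$ and let $A=(a_{ij})$ be an $n\times n$ nonnegative irreducible matrix with all diagonal entries $0$ and row sums $r_1\ge r_2\ge\cdots\ge r_n$. Let $N=\max_{i\ne j}a_{ij}$ and assume $N>0$. Then for $1\le i\le n$, \[\rho(A)\le \frac{r_i-N+\sqrt{(r_i+N)^2+4N\sum_{k=1}^{i-1}(r_k-r_i)}}{2}.\] Equality holds if and only if $r_1=\cdots=r_n$, or for some $2\le t\le i$: (i) $a_{kl}=N$ for all $1\le k\le n$, $1\le l\le t-1$, $k\ne l$; (ii) $r_t=\cdots=r_n$.
   Context: $\rho(A)$ denotes the spectral radius of $A$. An empty sum equals $0$. *)

From HB Require Import structures.
From mathcomp Require Import all_boot all_order all_algebra all_field.
Set Implicit Arguments. Unset Strict Implicit. Unset Printing Implicit Defensive.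
Import Order.TTheory GRing.Theory Num.Theory.
Local Open Scope ring_scope.

Definition eigenseq (C : closedFieldType) (n : nat) (A : 'M[C]_n) : seq C :=
  sval (closed_field_poly_normal (char_poly A)).

(* Spectral radius: the largest modulus of an eigenvalue
   (0 for the empty matrix). *)
Definition spectral_radius (C : numClosedFieldType) (n : nat) (A : 'M[C]_n) : C :=
  \big[Num.max/0]_(z <- eigenseq A) `|z|.

Definition row_sum (C : numClosedFieldType) (n : nat) (A : 'M[C]_n) (i : 'I_n) : C :=
  \sum_(j < n) A i j.

Definition max_offdiag (C : numClosedFieldType) (n : nat) (A : 'M[C]_n) : C :=
  \big[Num.max/0]_(i < n) \big[Num.max/0]_(j < n | j != i) A i j.

Definition nonneg_mx (C : numClosedFieldType) (n : nat) (A : 'M[C]_n) : Prop :=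
  forall i j, 0 <= A i j.

(* Irreducible (n >= 2 case): the directed graph with an edge k -> l iff
   a_kl <> 0 is strongly connected. *)
Definition irreducible_mx (C : numClosedFieldType) (n : nat) (A : 'M[C]_n) : Prop :=
  forall i j : 'I_n, connect (fun k l : 'I_n => A k l != 0) i j.

From HB Require Import structures.
From mathcomp Require Import all_boot all_order all_algebra all_field.
From mathcomp Require Import ring.
Set Implicit Arguments. Unset Strict Implicit. Unset Printing Implicit Defensive.
Import Order.TTheory GRing.Theory Num.Theory.
Local Open Scope ring_scope.

(* The bound is a Collatz--Wielandt estimate with a cleverly
   chosen positive test vector.
   - For a nonnegative matrix A, a vector d > 0 with A d <= th d (entrywise)
     bounds every eigenvalue: |lam| <= th.  Comparing an eigenvector v with d
     at an index where |v k| / d k is maximal proves this; if moreover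
     |lam| = th and A is irreducible, the maximal ratio propagates along the
     edges of the graph of A, which forces A d = th d.
   - Writing th for the right-hand side of the theorem, th is the larger root
     of (x - r_i)(x + N) = N S with S = sum_{k<i} (r_k - r_i).  The test vector
     d_k = 1 + (r_k - r_i)/(th + N) for k < i, d_k = 1 otherwise, satisfies
     th d_k - (A d)_k = g_k + sum_l e_kl with explicit nonnegative defects
     g_k, e_kl; this gives rho(A) <= th.
   - rho(A) = th then holds iff all defects vanish (irreducibility for one
     direction, th being a nonnegative eigenvalue with eigenvector d for the
     other), and vanishing of the defects is exactly the combinatorial
     equality condition of the theorem. *)

Lemma bigmax_nonneg_spec (R : numDomainType) (T : eqType) (s : seq T)
    (P : pred T) (f : T -> R) :
  (forall x, P x -> 0 <= f x) ->
  let M := \big[Num.max/0]_(x <- s | P x) f x in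
  [/\ 0 <= M, (forall x, x \in s -> P x -> f x <= M) &
      M = 0 \/ exists x, [/\ x \in s, P x & M = f x]].
Proof.
move=> f_ge0; elim: s => [|a s [M_ge0 le_M M_attained]].
  by rewrite big_nil; split=> //; left.
set M := \big[Num.max/0]_(x <- s | P x) f x in M_ge0 le_M M_attained *.
have M_attained_cons : M = 0 \/ exists x, [/\ x \in a :: s, P x & M = f x].
  case: M_attained => [|[x [xs Px ->]]]; [by left | right; exists x].
  by rewrite inE xs orbT.
rewrite /= big_cons; case: ifP => Pa; last first.
  split; [by [] | | exact: M_attained_cons].
  by move=> x; rewrite inE => /orP [/eqP -> | /le_M //]; rewrite Pa.
have fa_real : f a \is Num.real by apply/ger0_real/f_ge0.
have M_real : M \is Num.real by exact: ger0_real.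
case: (real_leP fa_real M_real) => [fa_le|M_lt].
  split; [by [] | | exact: M_attained_cons].
  by move=> x; rewrite inE => /orP [/eqP -> // | /le_M].
split; [exact: f_ge0 | | by right; exists a; rewrite inE eqxx].
move=> x; rewrite inE => /orP [/eqP -> // | xs Px].
exact: le_trans (le_M _ xs Px) (ltW M_lt).
Qed.

Section SpectralRadius.
Variables (C : numClosedFieldType) (n : nat) (A : 'M[C]_n).

(* The characteristic polynomial is invariant under transposition; used to
   read eigenvalues off column eigenvectors (MathComp uses row vectors). *)
Lemma char_poly_tr : char_poly A^T = char_poly A.
Proof.
rewrite /char_poly -det_tr; congr (\det _).
rewrite /char_poly_mx linearB /= tr_scalar_mx map_trmx.
by congr (_ - _); apply/matrixP => i j; rewrite !mxE.
Qed.

Lemma eigenseqP z :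
  z \in eigenseq A <->
  exists v : 'I_n -> C, (exists k, v k != 0) /\
                        forall k, \sum_l A k l * v l = z * v k.
Proof.
have -> : (z \in eigenseq A) = root (char_poly A) z.
  rewrite /eigenseq; case: (closed_field_poly_normal _) => s /= ->.
  by rewrite (monicP (char_poly_monic A)) scale1r root_prod_XsubC.
rewrite -char_poly_tr -eigenvalue_root_char; split.
  move/eigenvalueP => [v v_eig v_neq0]; exists (fun k => v 0 k); split.
    case: (pickP (fun k => v 0 k != 0)) => [k vk|v0]; first by exists k.
    case/eqP: v_neq0; apply/rowP => k; rewrite mxE; exact/eqP/negbFE/v0.
  move=> k; have := congr1 (fun u : 'rV[C]_n => u 0 k) v_eig; rewrite !mxE => <-.
  by apply: eq_bigr => l _; rewrite !mxE mulrC.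
move=> [v [[k vk] v_eig]]; apply/eigenvalueP; exists (\row_l v l).
  apply/rowP => j; rewrite !mxE -v_eig; apply: eq_bigr => l _.
  by rewrite !mxE mulrC.
by apply/negP => /eqP/rowP/(_ k); rewrite !mxE => vk0; rewrite vk0 eqxx in vk.
Qed.

Lemma size_eigenseq : size (eigenseq A) = n.
Proof.
rewrite /eigenseq; case: (closed_field_poly_normal _) => s /= s_def.
have := size_char_poly A.
by rewrite s_def (monicP (char_poly_monic A)) scale1r size_prod_XsubC; case.
Qed.

Lemma le_spectral_radius z : z \in eigenseq A -> `|z| <= spectral_radius A.
Proof.
move=> zA; have [_ le_max _] := @bigmax_nonneg_spec C _ (eigenseq A) (fun _ => true)
  (fun z => `|z|) (fun z _ => normr_ge0 z).
exact: le_max.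
Qed.

Lemma spectral_radius_attained :
  (0 < n)%N -> exists2 z, z \in eigenseq A & `|z| = spectral_radius A.
Proof.
move=> n_gt0; rewrite /spectral_radius.
have [_ le_max [rho0|[z [zA _ ->]]]] := @bigmax_nonneg_spec C _ (eigenseq A)
  (fun _ => true) (fun z => `|z|) (fun z _ => normr_ge0 z); last by exists z.
have [z0 z0A] : exists z0, z0 \in eigenseq A.
  move: size_eigenseq; case: (eigenseq A) => [|z s] /=; last first.
    by exists z; rewrite inE eqxx.
  by move=> n0; rewrite -n0 in n_gt0.
by exists z0 => //; apply: le_anti; rewrite le_max //= rho0 normr_ge0.
Qed.

End SpectralRadius.

Section CollatzWielandt.
Variables (C : numClosedFieldType) (n : nat) (A : 'M[C]_n).
Variables (d : 'I_n -> C) (th : C).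
Hypotheses (A_ge0 : nonneg_mx A) (d_gt0 : forall k, 0 < d k)
  (A_sub : forall k, \sum_l A k l * d l <= th * d k).
Variables (lam : C) (v : 'I_n -> C).
Hypotheses (v_neq0 : exists k, v k != 0)
  (v_eig : forall k, \sum_l A k l * v l = lam * v k).

Let y k := `|v k| / d k.
Let M := \big[Num.max/0]_(k < n) y k.

Let ratio_ge0 k : 0 <= y k.
Proof. by rewrite divr_ge0 // ltW. Qed.

Let norm_eq_ratio k : `|v k| = d k * y k.
Proof. by rewrite /y mulrC divfK // gt_eqF. Qed.

Let le_max_ratio k : y k <= M.
Proof.
have [_ le_max _] := @bigmax_nonneg_spec C _ (index_enum 'I_n) predT y
  (fun k _ => ratio_ge0 k).
by apply: le_max; rewrite ?mem_index_enum.
Qed.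

Let max_ratio_gt0 : 0 < M.
Proof.
have [k vk] := v_neq0; apply: lt_le_trans (le_max_ratio k).
by rewrite divr_gt0 ?normr_gt0.
Qed.

Let max_ratio_attained : exists k0, y k0 = M.
Proof.
have [_ _ [M0|[k [_ _ Mk]]]] := @bigmax_nonneg_spec C _ (index_enum 'I_n) predT
  y (fun k _ => ratio_ge0 k); last by exists k.
by move: max_ratio_gt0; rewrite /M M0 ltxx.
Qed.

Let max_ratio_chain k : y k = M ->
  [/\ `|lam| * `|v k| <= \sum_l A k l * `|v l|,
      \sum_l A k l * `|v l| <= M * \sum_l A k l * d l &
      M * \sum_l A k l * d l <= th * `|v k|].
Proof.
move=> yk; split.
- rewrite -normrM -v_eig; apply: le_trans (ler_norm_sum _ _ _) _.
  by apply: ler_sum => l _; rewrite normrM (ger0_norm (A_ge0 k l)).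
- rewrite mulr_sumr; apply: ler_sum => l _.
  rewrite mulrCA; apply: ler_wpM2l => //; rewrite norm_eq_ratio mulrC.
  by apply: ler_wpM2r; [exact: ltW | exact: le_max_ratio].
- rewrite norm_eq_ratio yk mulrA [_ * M]mulrC.
  by apply: ler_wpM2l; [exact: ltW | exact: A_sub].
Qed.

Lemma eigenvalue_norm_le : `|lam| <= th.
Proof.
have [k0 yk0] := max_ratio_attained.
have [le_eig le_ratio le_sub] := max_ratio_chain yk0.
have vk0_gt0 : 0 < `|v k0| by rewrite norm_eq_ratio yk0 mulr_gt0.
by rewrite -(ler_pM2r vk0_gt0) (le_trans le_eig) // (le_trans le_ratio).
Qed.

Hypothesis lam_norm : `|lam| = th.

(* If |lam| = th, every inequality of the chain is an equality: row k of
   A d <= th d is tight, and the maximal ratio is reached at every l with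
   A k l != 0. *)
Let max_ratio_tight k : y k = M ->
  \sum_l A k l * d l = th * d k /\ forall l, A k l != 0 -> y l = M.
Proof.
move=> yk; have [le_eig le_ratio le_sub] := max_ratio_chain yk.
rewrite lam_norm in le_eig.
have e23 : M * \sum_l A k l * d l = th * `|v k|.
  by apply: le_anti; rewrite le_sub (le_trans le_eig le_ratio).
have e12 : \sum_l A k l * `|v l| = M * \sum_l A k l * d l.
  by apply: le_anti; rewrite le_ratio e23 le_eig.
split.
  apply: (mulfI (negbT (gt_eqF max_ratio_gt0))).
  by rewrite e23 norm_eq_ratio yk mulrA mulrC.
have gap_ge0 l : 0 <= A k l * (d l * M - `|v l|).
  rewrite mulr_ge0 // subr_ge0 norm_eq_ratio.
  by apply: ler_wpM2l; [exact: ltW | exact: le_max_ratio].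
have gap_sum : \sum_l A k l * (d l * M - `|v l|) = 0.
  under eq_bigr do rewrite mulrBr.
  rewrite sumrB e12 mulr_sumr; apply/eqP; rewrite subr_eq0; apply/eqP/eq_bigr => l _.
  by rewrite mulrA mulrC.
move=> l Akl; have /eqP := @psumr_eq0P _ _ _ _ (fun l _ => gap_ge0 l) gap_sum l isT.
rewrite mulf_eq0 (negbTE Akl) /= subr_eq0 norm_eq_ratio => /eqP dM.
by apply: (mulfI (negbT (gt_eqF (d_gt0 l)))); rewrite dM.
Qed.

Hypothesis A_irr : irreducible_mx A.

(* By strong connectivity the maximal ratio is reached everywhere, so every
   row of A d <= th d is tight. *)
Lemma subinvariant_tight k : \sum_l A k l * d l = th * d k.
Proof.
have [k0 yk0] := max_ratio_attained.
have along_path p x : y x = M ->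
    path (fun k l => A k l != 0) x p -> y (last x p) = M.
  elim: p x => //= a p IH x yx /andP [Axa pa].
  by apply: IH pa; exact: (max_ratio_tight yx).2.
have /connectP [p p_path ->] := A_irr k0 k.
exact: (max_ratio_tight (along_path p k0 yk0 p_path)).1.
Qed.

End CollatzWielandt.

Section CollatzWielandtSpectral.
Variables (C : numClosedFieldType) (n : nat) (A : 'M[C]_n).
Variables (d : 'I_n -> C) (th : C).
Hypotheses (A_ge0 : nonneg_mx A) (d_gt0 : forall k, 0 < d k)
  (A_sub : forall k, \sum_l A k l * d l <= th * d k).

Lemma spectral_radius_le_sub : 0 <= th -> spectral_radius A <= th.
Proof.
move=> th_ge0; rewrite /spectral_radius.
have [_ _ [->|[z [zA _ ->]]]] //= := @bigmax_nonneg_spec C _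
  (eigenseq A) (fun _ => true) (fun z => `|z|) (fun z _ => normr_ge0 z).
have [v [v_neq0 v_eig]] := (eigenseqP A z).1 zA.
exact: (eigenvalue_norm_le A_ge0 d_gt0 A_sub v_neq0 v_eig).
Qed.

Lemma spectral_radius_tight : (0 < n)%N -> irreducible_mx A ->
  spectral_radius A = th -> forall k, \sum_l A k l * d l = th * d k.
Proof.
move=> n_gt0 A_irr rho_th; have [z zA z_rho] := spectral_radius_attained A n_gt0.
have [v [v_neq0 v_eig]] := (eigenseqP A z).1 zA.
have z_th : `|z| = th by rewrite z_rho.
exact: (subinvariant_tight A_ge0 d_gt0 A_sub v_neq0 v_eig z_th A_irr).
Qed.

End CollatzWielandtSpectral.

Lemma eigenvalue_le_spectral_radius (C : numClosedFieldType) (n : nat)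
    (A : 'M[C]_n) (d : 'I_n -> C) (th : C) :
  0 <= th -> (exists k, d k != 0) ->
  (forall k, \sum_l A k l * d l = th * d k) -> th <= spectral_radius A.
Proof.
move=> th_ge0 d_neq0 d_eig; rewrite -(ger0_norm th_ge0).
by apply/le_spectral_radius/(eigenseqP A th); exists d.
Qed.

Lemma le_max_offdiag (C : numClosedFieldType) (n : nat) (A : 'M[C]_n) k l :
  nonneg_mx A -> k != l -> A k l <= max_offdiag A.
Proof.
move=> A_ge0 kl; pose row_max k := \big[Num.max/0]_(j < n | j != k) A k j.
have row_spec k := @bigmax_nonneg_spec C _ (index_enum 'I_n) (fun j => j != k)
  (A k) (fun j _ => A_ge0 k j).
have row_max_ge0 j : 0 <= row_max j by have [] := row_spec j.
have [_ le_row _] := row_spec k.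
have [_ le_rows _] := @bigmax_nonneg_spec C _ (index_enum 'I_n) predT row_max
  (fun j _ => row_max_ge0 j).
apply: le_trans (le_row l _ _) (le_rows k _ _); rewrite ?mem_index_enum //.
by rewrite eq_sym.
Qed.

Lemma quadratic_bound (C : numClosedFieldType) (a N S : C) :
  0 <= a -> 0 < N -> 0 <= S ->
  let th := (a - N + sqrtC ((a + N) ^+ 2 + 4 * N * S)) / 2 in
  a <= th /\ N * S = (th - a) * (th + N).
Proof.
move=> a_ge0 N_gt0 S_ge0 th.
set D := (a + N) ^+ 2 + 4 * N * S.
have th_def : th = (a - N + sqrtC D) / 2 by [].
have N_ge0 := ltW N_gt0.
have D_ge0 : 0 <= D by rewrite addr_ge0 ?exprn_ge0 ?mulr_ge0 ?ler0n ?addr_ge0.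
have sqrtD : sqrtC D ^+ 2 = D by rewrite sqrtCK.
have le_sqrtD : a + N <= sqrtC D.
  have aN_ge0 : 0 <= a + N by rewrite addr_ge0.
  rewrite -(sqrCK aN_ge0) ler_sqrtC ?nnegrE ?exprn_ge0 //.
  by rewrite lerDl !mulr_ge0 ?ler0n.
split.
  have -> : th = a + (sqrtC D - (a + N)) / 2 by rewrite th_def; field.
  by rewrite lerDl divr_ge0 // subr_ge0.
have -> : N * S = (sqrtC D ^+ 2 - (a + N) ^+ 2) / 4 by rewrite sqrtD /D; field.
by rewrite th_def; field.
Qed.

Section TestVector.
Variables (C : numClosedFieldType) (n : nat) (A : 'M[C]_n).
Hypotheses (A_ge0 : nonneg_mx A) (A_diag : forall k, A k k = 0)
  (r_sorted : forall k l : 'I_n, (k <= l)%N -> row_sum A l <= row_sum A k)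
  (N_gt0 : 0 < max_offdiag A).
Variable i : 'I_n.

Let N := max_offdiag A.
Let r := row_sum A.
Let S := \sum_(k < n | (k < i)%N) (r k - r i).
Let th := (r i - N + sqrtC ((r i + N) ^+ 2 + 4 * N * S)) / 2.

Let c (k : 'I_n) : C := if (k < i)%N then (r k - r i) / (th + N) else 0.
Let d (k : 'I_n) : C := 1 + c k.
Let e (k l : 'I_n) : C := (if l == k then 0 else N) * c l - A k l * c l.
Let g (k : 'I_n) : C := (th + N) * c k - (r k - r i).

Let r_ge0 k : 0 <= r k.
Proof. by apply: sumr_ge0 => l _; exact: A_ge0. Qed.

Let bound_props : r i <= th /\ N * S = (th - r i) * (th + N).
Proof.
apply: quadratic_bound; rewrite ?r_ge0 //.
by apply: sumr_ge0 => k ki; rewrite subr_ge0 r_sorted // ltnW.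
Qed.

Lemma bound_ge0 : 0 <= th.
Proof. exact: le_trans (r_ge0 i) bound_props.1. Qed.

Let thN_gt0 : 0 < th + N.
Proof. by rewrite (lt_le_trans N_gt0) // lerDr bound_ge0. Qed.

Let c_ge0 k : 0 <= c k.
Proof.
rewrite /c; case: ifP => // ki.
by rewrite divr_ge0 ?(ltW thN_gt0) // subr_ge0 r_sorted // ltnW.
Qed.

Lemma test_vector_gt0 k : 0 < d k.
Proof. by rewrite /d ltr_pwDl. Qed.

Let N_sum_c : N * \sum_l c l = th - r i.
Proof.
have -> : \sum_l c l = S / (th + N).
  rewrite /S mulr_suml [RHS]big_mkcond; apply: eq_bigr => l _.
  by rewrite /c; case: ifP => // _; rewrite mul0r.
by rewrite mulrA bound_props.2 mulfK // gt_eqF.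
Qed.

Let e_ge0 k l : 0 <= e k l.
Proof.
rewrite /e; case: eqP => [->|/eqP lk]; first by rewrite A_diag mul0r subrr.
by rewrite -mulrBl mulr_ge0 // subr_ge0 le_max_offdiag // eq_sym.
Qed.

Let g_ge0 k : 0 <= g k.
Proof.
rewrite /g /c; case: ifP => ki; first by rewrite mulrC divfK ?subrr // gt_eqF.
by rewrite mulr0 sub0r oppr_ge0 subr_le0 r_sorted // leqNgt ki.
Qed.

Let defect_identity k :
  th * d k - \sum_l A k l * d l = g k + \sum_l e k l.
Proof.
have Ad : \sum_l A k l * d l = r k + \sum_l A k l * c l.
  by rewrite /d; under eq_bigr do rewrite mulrDr mulr1; rewrite big_split.
have sum_e : \sum_l e k l = N * \sum_l c l - N * c k - \sum_l A k l * c l.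
  rewrite /e sumrB; congr (_ - _).
  rewrite mulr_sumr [in RHS](bigD1 k) //= [in LHS](bigD1 k) //= eqxx mul0r.
  by rewrite add0r addrC addrK; apply: eq_bigr => l /negbTE ->.
by rewrite Ad sum_e N_sum_c /g /d; ring.
Qed.

Lemma test_vector_sub k : \sum_l A k l * d l <= th * d k.
Proof. by rewrite -subr_ge0 defect_identity addr_ge0 // sumr_ge0. Qed.

Let test_vector_tightP k :
  \sum_l A k l * d l = th * d k <-> g k = 0 /\ forall l, e k l = 0.
Proof.
rewrite -[_ = _]/(_ = _ :> C); split.
  move/eqP; rewrite eq_sym -subr_eq0 defect_identity paddr_eq0 ?sumr_ge0 //.
  by case/andP => /eqP g0 /eqP/psumr_eq0P e0; split=> // l; exact: e0.
move=> [g0 e0]; apply/eqP; rewrite eq_sym -subr_eq0 defect_identity g0 add0r.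
by rewrite big1.
Qed.

Let equality_case :=
  (forall k l : 'I_n, r k = r l) \/
  exists t : 'I_n, [/\ (1 <= t)%N, (t <= i)%N,
    (forall k l : 'I_n, k != l -> (l < t)%N -> A k l = N) &
    (forall k : 'I_n, (t <= k)%N -> r k = r t)].

(* Tightness everywhere yields the equality condition, with t the first
   index whose row sum equals r_i. *)
Lemma equality_case_of_tight :
  (forall k, \sum_l A k l * d l = th * d k) -> equality_case.
Proof.
move=> tight; have g0 k := ((test_vector_tightP k).1 (tight k)).1.
have e0 k := ((test_vector_tightP k).1 (tight k)).2.
have r_tail (k : 'I_n) : (i <= k)%N -> r k = r i.
  move=> ik; move: (g0 k); rewrite /g /c ltnNge ik /= mulr0 sub0r.
  by move/eqP; rewrite oppr_eq0 subr_eq0 => /eqP.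
have A_N (k l : 'I_n) : k != l -> (l < i)%N -> r l != r i -> A k l = N.
  move=> kl li rl; move: (e0 k l); rewrite /e eq_sym (negbTE kl) -mulrBl.
  move/eqP; rewrite mulf_eq0 subr_eq0 /c li /= mulf_eq0 invr_eq0.
  by rewrite (gt_eqF thN_gt0) subr_eq0 (negbTE rl) !orbF => /eqP.
case: (@arg_minnP _ i (fun k => r k == r i) val) => // t /eqP rt t_min.
have ti : (t <= i)%N by exact: t_min.
have r_t (k : 'I_n) : (t <= k)%N -> r k = r t.
  move=> tk; case: (leqP k i) => ki; last by rewrite r_tail ?rt // ltnW.
  by apply: le_anti; rewrite r_sorted //= rt r_sorted.
case: (posnP t) => [t0|t_gt0]; first by left => k l; rewrite r_t ?r_t ?t0.
right; exists t; split=> // k l kl lt; apply: A_N (leq_trans lt ti) _ => //.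
by apply/negP => /t_min; rewrite leqNgt lt.
Qed.

Lemma tight_of_equality_case :
  equality_case -> forall k, \sum_l A k l * d l = th * d k.
Proof.
move=> eq_case k; apply/test_vector_tightP.
case: eq_case => [r_const|[t [_ ti A_N r_t]]].
  have c0 l : c l = 0 by rewrite /c (r_const l i) subrr mul0r if_same.
  by split=> [|l]; rewrite /g /e c0 ?(r_const k i) !(mulr0, subrr).
have c0 (l : 'I_n) : (t <= l)%N -> c l = 0.
  by move=> tl; rewrite /c (r_t l tl) -(r_t i ti) subrr mul0r if_same.
split.
  rewrite /g /c; case: ifP => ki; first by rewrite mulrC divfK ?subrr // gt_eqF.
  rewrite mulr0 (r_t k) -?(r_t i ti) ?subrr ?subr0 //.
  by apply: leq_trans ti _; rewrite leqNgt ki.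
move=> l; rewrite /e; case: eqP => [->|/eqP lk]; first by rewrite A_diag !mul0r subrr.
case: (ltnP l t) => lt; first by rewrite A_N 1?eq_sym // subrr.
by rewrite c0 // !mulr0 subrr.
Qed.

End TestVector.

Theorem corollary2 (C : numClosedFieldType) (n : nat) (A : 'M[C]_n)
  (hn : (2 <= n)%N)
  (hnn : nonneg_mx A) (hirr : irreducible_mx A)
  (hdiag : forall i, A i i = 0)
  (hsorted : forall k l : 'I_n, (k <= l)%N -> row_sum A l <= row_sum A k)
  (hN : 0 < max_offdiag A) :
  forall i : 'I_n,
    let N := max_offdiag A in
    let r := row_sum A in
    let bound := (r i - N +
        sqrtC ((r i + N) ^+ 2 + 4 * N * \sum_(k < n | (k < i)%N) (r k - r i))) / 2 in
    spectral_radius A <= bound /\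
    (spectral_radius A = bound <->
       ((forall k l : 'I_n, r k = r l) \/
        exists t : 'I_n, [/\ (1 <= t)%N, (t <= i)%N,
          (forall k l : 'I_n, k != l -> (l < t)%N -> A k l = N) &
          (forall k : 'I_n, (t <= k)%N -> r k = r t)])).
Proof.
move=> i N r bound.
have d_gt0 := test_vector_gt0 hnn hsorted hN i.
have A_sub := test_vector_sub hnn hdiag hsorted hN i.
have bound_ge0 : 0 <= bound := bound_ge0 hnn hsorted hN i.
have rho_le := spectral_radius_le_sub hnn d_gt0 A_sub bound_ge0.
split=> //; split=> [rho_bound | eq_case].
  have tight := spectral_radius_tight hnn d_gt0 A_sub (ltnW hn) hirr rho_bound.
  exact: (equality_case_of_tight hnn hdiag hsorted hN tight).
have tight := tight_of_equality_case hnn hdiag hsorted hN eq_case.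
apply: le_anti; rewrite rho_le (eigenvalue_le_spectral_radius bound_ge0 _ tight) //.
by exists i; rewrite gt_eqF // d_gt0.
Qed.
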